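(* If $(P,\tau,\leq)$ is a Priestley space, then $\tau \subseteq \tau_o(P)$.
   Context: A Priestley space is a triple $(P,\tau,\leq)$ where $(P,\leq)$ is a partially ordered set and $\tau$ is a compact topology on $P$ such that the space is totally order-disconnected: whenever $x\not\leq y$ there is a $\tau$-clopen up-set $U$ (i.e. $u\in U$, $u\leq v$ imply $v\in U$) with $x\in U$ and $y\notin U$. For $A\subseteq P$ let $A^l=\{x\in P: x\leq a \text{ for all } a\in A\}$ and $A^u=\{x\in P: x\geq a\text{ for all } a\in A\}$; for a family $\mathcal{S}$ of subsets of $P$ let $\mathcal{S}^l=\bigcup\{S^l: S\in\mathcal{S}\}$ and $\mathcal{S}^u=\bigcup\{S^u:S\in\mathcal{S}\}$. $\bigwedge A$ denotes the greatest element of $A^l$ (if it exists) and $\bigvee A$ the least element of $A^u$ (if it exists). A filter $\mathcal{F}$ on $P$ (a nonempty family of subsets of $P$ not containing $\emptyset$, closed under finite intersections and supersets) order-converges to $x\in P$ if $\bigwedge \mathcal{F}^u = x = \bigvee \mathcal{F}^l$. The order convergence topology is $\tau_o(P)=\{U\subseteq P: \text{for every } x\in U \text{ and every filter } \mathcal{F} \text{ on } P \text{ order-converging to } x, \ U\in\mathcal{F}\}$. *)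

From Stdlib Require Import Classical List.

Set Implicit Arguments.

Definition set (T : Type) := T -> Prop.

Section Defs.
Variable T : Type.

Definition is_partial_order (le : T -> T -> Prop) : Prop :=
  (forall x, le x x) /\
  (forall x y, le x y -> le y x -> x = y) /\
  (forall x y z, le x y -> le y z -> le x z).

Definition is_topology (tau : set (set T)) : Prop :=
  tau (fun _ => True) /\
  (forall F : set (set T), (forall U, F U -> tau U) ->
      tau (fun x => exists U, F U /\ U x)) /\
  (forall U V, tau U -> tau V -> tau (fun x => U x /\ V x)).

Definition compact_topology (tau : set (set T)) : Prop :=
  forall (I : Type) (U : I -> set T),
    (forall i, tau (U i)) -> (forall x, exists i, U i x) ->
    exists l : list I, forall x, exists i, List.In i l /\ U i x.

Definition closed_in (tau : set (set T)) (A : set T) : Prop :=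
  tau (fun x => ~ A x).

Definition clopen (tau : set (set T)) (A : set T) : Prop :=
  tau A /\ closed_in tau A.

Definition up_set (le : T -> T -> Prop) (U : set T) : Prop :=
  forall u v, U u -> le u v -> U v.

Definition totally_order_disconnected (tau : set (set T)) (le : T -> T -> Prop) :=
  forall x y, ~ le x y ->
    exists U, clopen tau U /\ up_set le U /\ U x /\ ~ U y.

Definition Priestley_space (tau : set (set T)) (le : T -> T -> Prop) : Prop :=
  is_partial_order le /\ is_topology tau /\ compact_topology tau /\
  totally_order_disconnected tau le.

Definition lower_bounds (le : T -> T -> Prop) (A : set T) : set T :=
  fun x => forall a, A a -> le x a.
Definition upper_bounds (le : T -> T -> Prop) (A : set T) : set T :=
  fun x => forall a, A a -> le a x.

Definition fam_lower (le : T -> T -> Prop) (S : set (set T)) : set T :=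
  fun x => exists A, S A /\ lower_bounds le A x.
Definition fam_upper (le : T -> T -> Prop) (S : set (set T)) : set T :=
  fun x => exists A, S A /\ upper_bounds le A x.

Definition is_inf (le : T -> T -> Prop) (A : set T) (x : T) : Prop :=
  lower_bounds le A x /\ forall y, lower_bounds le A y -> le y x.
Definition is_sup (le : T -> T -> Prop) (A : set T) (x : T) : Prop :=
  upper_bounds le A x /\ forall y, upper_bounds le A y -> le x y.

Definition is_filter (F : set (set T)) : Prop :=
  (exists A, F A) /\
  ~ F (fun _ => False) /\
  (forall A B, F A -> F B -> F (fun x => A x /\ B x)) /\
  (forall A B, F A -> (forall x, A x -> B x) -> F B).

Definition order_converges (le : T -> T -> Prop) (F : set (set T)) (x : T) : Prop :=
  is_inf le (fam_upper le F) x /\ is_sup le (fam_lower le F) x.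

Definition tau_o (le : T -> T -> Prop) : set (set T) :=
  fun U => forall x, U x -> forall F, is_filter F -> order_converges le F x -> F U.

End Defs.

(* Let F order-converge to x and y <> x.  If y is not below x = /\ F^u, some
   upper bound u of a member of F is not above y, and a clopen up-set containing
   y but not u misses that member; dually, if x = \/ F^l is not below y, the
   complement of a clopen up-set separating a lower bound from y works.  So
   every y <> x has an open neighbourhood missing a member of F.  By compactness
   finitely many of these, together with an open U around x, cover the space,
   and the intersection of the corresponding members of F lies in U. *)
From Stdlib Require Import Classical List.

Set Implicit Arguments.

Section FilterAvoidance.
Variables (P : Type) (tau : set (set P)) (le : P -> P -> Prop).

Definition disjoint (A O : set P) : Prop := forall z, A z -> ~ O z.

Definition avoids_nbhd (F : set (set P)) (y : P) : Prop :=
  exists O, tau O /\ O y /\ exists A, F A /\ disjoint A O.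

Lemma avoids_nbhd_of_not_le_inf (F : set (set P)) (x y : P) :
  totally_order_disconnected tau le ->
  is_inf le (fam_upper le F) x -> ~ le y x -> avoids_nbhd F y.
Proof.
  intros Htod [_ Hgreatest] Hyx.
  assert (Hnlb : ~ lower_bounds le (fam_upper le F) y) by auto.
  apply not_all_ex_not in Hnlb as [u Hu].
  apply imply_to_and in Hu as [[B [HB HBu]] Hyu].
  destruct (Htod _ _ Hyu) as [W [[HW _] [Hup [HWy HWu]]]].
  exists W; split; [exact HW | split; [exact HWy |]].
  exists B; split; [exact HB |].
  intros z Hz HWz; apply HWu; exact (Hup z u HWz (HBu z Hz)).
Qed.

Lemma avoids_nbhd_of_not_le_sup (F : set (set P)) (x y : P) :
  totally_order_disconnected tau le ->
  is_sup le (fam_lower le F) x -> ~ le x y -> avoids_nbhd F y.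
Proof.
  intros Htod [_ Hleast] Hxy.
  assert (Hnub : ~ upper_bounds le (fam_lower le F) y) by auto.
  apply not_all_ex_not in Hnub as [l Hl].
  apply imply_to_and in Hl as [[A [HA HAl]] Hly].
  destruct (Htod _ _ Hly) as [W [[_ HW] [Hup [HWl HWy]]]].
  exists (fun z => ~ W z); split; [exact HW | split; [exact HWy |]].
  exists A; split; [exact HA |].
  intros z Hz HnW; apply HnW; exact (Hup l z HWl (HAl z Hz)).
Qed.

Lemma order_converges_avoids_nbhd (F : set (set P)) (x y : P) :
  (forall a b, le a b -> le b a -> a = b) ->
  totally_order_disconnected tau le ->
  order_converges le F x -> x <> y -> avoids_nbhd F y.
Proof.
  intros Hantisym Htod [Hinf Hsup] Hxy.
  destruct (classic (le x y)) as [Hle | Hnle].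
  - apply (avoids_nbhd_of_not_le_inf Htod Hinf).
    intro Hyx; exact (Hxy (Hantisym x y Hle Hyx)).
  - exact (avoids_nbhd_of_not_le_sup Htod Hsup Hnle).
Qed.

Lemma filter_finite_cover_subset (F : set (set P)) (U : set P)
    (I : Type) (O : I -> set P) (l : list I) :
  is_filter F ->
  (forall i, In i l -> (forall z, O i z -> U z) \/ exists A, F A /\ disjoint A (O i)) ->
  exists A, F A /\ forall z, A z -> forall i, In i l -> O i z -> U z.
Proof.
  intros [[A0 HA0] [_ [Hcap _]]].
  induction l as [| i l IH]; intros Hl.
  - exists A0; split; [exact HA0 |]; intros z _ i [].
  - destruct IH as [A [HA HAU]]; [intros j Hj; apply Hl; right; exact Hj |].
    destruct (Hl i (or_introl eq_refl)) as [HiU | [B [HB HBi]]].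
    + exists A; split; [exact HA |].
      intros z Hz j [<- | Hj] Hjz; [exact (HiU z Hjz) | exact (HAU z Hz j Hj Hjz)].
    + exists (fun z => A z /\ B z); split; [exact (Hcap A B HA HB) |].
      intros z [Hz HzB] j [<- | Hj] Hjz.
      * exfalso; exact (HBi z HzB Hjz).
      * exact (HAU z Hz j Hj Hjz).
Qed.

Lemma compact_filter_contains_open (F : set (set P)) (U : set P) :
  compact_topology tau -> is_filter F -> tau U ->
  (forall y, ~ U y -> avoids_nbhd F y) -> F U.
Proof.
  intros Hcomp HF HU Havoid.
  pose (cover := fun O : set P =>
    tau O /\ ((forall z, O z -> U z) \/ exists A, F A /\ disjoint A O)).
  destruct (Hcomp {O | cover O} (@proj1_sig _ _)) as [l Hl].
  - intros i; exact (proj1 (proj2_sig i)).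
  - intros y; destruct (classic (U y)) as [Hy | Hy].
    + exists (exist cover U (conj HU (or_introl (fun z Hz => Hz)))); exact Hy.
    + destruct (Havoid y Hy) as [O [HO [HOy HOF]]].
      exists (exist cover O (conj HO (or_intror HOF))); exact HOy.
  - destruct (@filter_finite_cover_subset F U _ (@proj1_sig _ _) l HF)
      as [A [HA HAU]].
    { intros i _; exact (proj2 (proj2_sig i)). }
    destruct HF as [_ [_ [_ Hsuper]]].
    apply (Hsuper A U HA).
    intros z Hz; destruct (Hl z) as [i [Hi Hiz]]; exact (HAU z Hz i Hi Hiz).
Qed.

End FilterAvoidance.

Theorem corollary2p2 (P : Type) (tau : set (set P)) (le : P -> P -> Prop) :
  Priestley_space tau le ->
  forall U : set P, tau U -> tau_o le U.
Proof.
  intros [[_ [Hantisym _]] [_ [Hcomp Htod]]] U HU x Hx F HF Hconv.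
  apply (compact_filter_contains_open U Hcomp HF HU).
  intros y Hy.
  apply (order_converges_avoids_nbhd Hantisym Htod Hconv).
  intros <-; exact (Hy Hx).
Qed.
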